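(* Let $X$ be a non-negative random variable with finite mean $\mu>0$. For any integer $m\geqslant 2$ there exist constants $r_m,s_m>0$ such that \[ IG_{m;\min}(X)=G(X+r_m),\qquad IG_{m;\max}(X)=G(X+s_m), \] where for a non-negative random variable $Y$ with mean $\mu_Y>0$, $G(Y)=\dfrac{\mathbb{E}|Y_1-Y_2|}{2\mu_Y}$ is the classical Gini coefficient, $Y_1,Y_2$ being i.i.d. copies of $Y$.
   Context: For an integer $m\geqslant 2$ and i.i.d. copies $X_1,\ldots,X_m$ of $X$, the extended lower Gini index is $IG_{m;\min}(X)=\dfrac{\mathbb{E}[X_1-\min\{X_1,\ldots,X_m\}]}{m\mu}$ and the extended upper Gini index is $IG_{m;\max}(X)=\dfrac{\mathbb{E}[\max\{X_1,\ldots,X_m\}-X_1]}{m\mu}$. *)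

From HB Require Import structures.
From mathcomp Require Import all_boot all_order all_algebra.
From mathcomp Require Import all_classical all_reals all_analysis.
Set Implicit Arguments. Unset Strict Implicit. Unset Printing Implicit Defensive.
Import Order.TTheory GRing.Theory Num.Theory.
Local Open Scope classical_set_scope.
Local Open Scope ring_scope.

Definition iid_copies {R : realType} {d} {T : measurableType d}
  (P : probability T R) (X : T -> R)
  {d'} {T' : measurableType d'} (P' : probability T' R) (n : nat)
  (Y : 'I_n -> T' -> R) : Prop :=
  [/\ (forall i, measurable_fun setT (Y i)),
      (forall i (B : set R), measurable B -> P' (Y i @^-1` B) = P (X @^-1` B)) &
      (forall B : 'I_n -> set R, (forall i, measurable (B i)) ->
         P' (\bigcap_(i in [set: 'I_n]) (Y i @^-1` B i))
         = \big[*%E/1%E]_(i < n) P' (Y i @^-1` B i))].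

(* Extended lower Gini index  E[X_1 - min(X_1..X_m)] / (m mu), computed on
   i.i.d. copies Y of X; X_1 is the copy of index 0 (needs 0 < m). *)
Definition IG_min {R : realType} {d} {T : measurableType d}
  (P : probability T R) (X : T -> R)
  {d'} {T' : measurableType d'} (P' : probability T' R) (m : nat)
  (Hm : (0 < m)%N) (Y : 'I_m -> T' -> R) : R :=
  fine (\int[P']_w ((Y (Ordinal Hm) w)%:E
                     - \big[Order.min/+oo%E]_(i < m) (Y i w)%:E))%E
  / (m%:R * fine 'E_P[X]).

Definition IG_max {R : realType} {d} {T : measurableType d}
  (P : probability T R) (X : T -> R)
  {d'} {T' : measurableType d'} (P' : probability T' R) (m : nat)
  (Hm : (0 < m)%N) (Y : 'I_m -> T' -> R) : R :=
  fine (\int[P']_w (\big[Order.max/-oo%E]_(i < m) (Y i w)%:E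
                     - (Y (Ordinal Hm) w)%:E))%E
  / (m%:R * fine 'E_P[X]).

Definition Gini {R : realType} {d} {T : measurableType d}
  (P : probability T R) (Y : T -> R)
  {d'} {T' : measurableType d'} (P' : probability T' R)
  (W : 'I_2 -> T' -> R) : R :=
  fine (\int[P']_w (`| W ord0 w - W ord_max w |)%:E)%E
  / (2 * fine 'E_P[Y]).

From HB Require Import structures.
From mathcomp Require Import all_boot all_order all_algebra.
From mathcomp Require Import all_classical all_reals all_analysis.
From mathcomp Require Import measurable_realfun ring lra.
Import Order.TTheory GRing.Theory Num.Theory.
Local Open Scope classical_set_scope.
Local Open Scope ring_scope.

(* Write S(t) = P(X > t). The minimum of k i.i.d. copies of X has tail S^k and
   their maximum has tail 1 - (1 - S)^k; integrating tails, with
   a_k = \int_0^oo S^k and b_k = \int_0^oo 1 - (1 - S)^k, gives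
   m mu IG_min = mu - a_m and m mu IG_max = b_m - mu, where mu = a_1.
   Since |x - y| = x + y - 2 min(x, y) and the Gini mean difference does not
   see shifts, 2 (mu + r) G(X + r) = 2 (mu - a_2). Both identities are thus
   of the form L / (m mu) = D / (mu + r) with D = mu - a_2, which has a
   solution r > 0 as soon as D <= L <= (m - 1) D. These bounds come from
   integrating s^m <= s^2 and s - s^m <= (m - 1)(s - s^2), valid on [0, 1],
   at s = S and at s = 1 - S. *)

Lemma subr_exprS_le {R : realDomainType} (s : R) k : 0 <= s <= 1 ->
  s - s ^+ k.+1 <= k%:R * (s - s ^+ 2).
Proof.
case/andP=> s0 s1; elim: k => [|k IHk]; first by rewrite expr1 subrr mul0r.
have sk_le : s ^+ k.+1 <= s by rewrite -[leRHS]expr1 ler_wiXn2l.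
have -> : s - s ^+ k.+2 = (s - s ^+ k.+1) + s ^+ k.+1 * (1 - s) by rewrite exprS; ring.
rewrite -natr1 mulrDl mul1r lerD //.
have -> : s - s ^+ 2 = s * (1 - s) by ring.
by rewrite ler_wpM2r // subr_ge0.
Qed.

Lemma shifted_ratio {R : realFieldType} {mu D L : R} {m : nat} :
  0 < mu -> (1 < m)%N -> D <= L <= (m%:R - 1) * D ->
  exists2 r, 0 < r & L / (m%:R * mu) = D / (mu + r).
Proof.
move=> mu_gt0 m_gt1 /andP[DL LD].
have m_ge2 : 2 <= m%:R :> R by rewrite (ler_nat R 2 m).
have [D0|D_neq0] := eqVneq D 0.
  rewrite D0 mulr0 in DL LD; have L0 : L = 0 by apply: le_anti; rewrite LD DL.
  by exists 1; rewrite // D0 L0 !mul0r.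
have L_neq0 : L != 0.
  by apply: contra_neq D_neq0 => L0; move: DL LD; rewrite L0; nra.
have ratio_gt1 : 1 < m%:R * D / L.
  have [L_lt0|L_gt0|L0] := ltgtP L 0; last by rewrite L0 eqxx in L_neq0.
    by rewrite ltr_ndivlMr // mul1r; nra.
  by rewrite ltr_pdivlMr // mul1r; nra.
exists (mu * (m%:R * D / L - 1)); first by rewrite mulr_gt0 // subr_gt0.
have mu_neq0 : mu != 0 by rewrite gt_eqF.
have m_neq0 : m%:R != 0 :> R by rewrite pnatr_eq0 -lt0n ltnW.
field; have -> : mu * L + mu * (m%:R * D + -1 * L) = mu * m%:R * D by ring.
by rewrite L_neq0 mu_neq0 m_neq0 !mulf_neq0.
Qed.

Section integral_inequality.
Context {d} {T : measurableType d} {R : realType} (mu : {measure set T -> \bar R}).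
Context (D : set T).
Hypothesis mD : measurable D.
Local Open Scope ereal_scope.

Lemma ge0_integralDZ_EFin (c : R) (f g : T -> R) : (0 <= c)%R ->
  measurable_fun D f -> measurable_fun D g ->
  (forall t, D t -> 0 <= f t /\ 0 <= g t)%R ->
  \int[mu]_(t in D) (f t + c * g t)%:E
  = \int[mu]_(t in D) (f t)%:E + c%:E * \int[mu]_(t in D) (g t)%:E.
Proof.
move=> c_ge0 mf mg fg_ge0.
have mfE : measurable_fun D (EFin \o f) by exact/measurable_EFinP.
have mgE : measurable_fun D (EFin \o g) by exact/measurable_EFinP.
under eq_integral do rewrite EFinD EFinM.
rewrite ge0_integralD //; last 3 first.
- by move=> t /fg_ge0[f_ge0 _]; rewrite lee_fin.
- by move=> t /fg_ge0[_ g_ge0]; rewrite lee_fin mulr_ge0.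
- exact: emeasurable_funM.
by rewrite ge0_integralZl_EFin // => t /fg_ge0[_ g_ge0]; rewrite lee_fin.
Qed.

Lemma ge0_le_integralDZ (c : R) (f g h k : T -> R) : (0 <= c)%R ->
  measurable_fun D f -> measurable_fun D g ->
  measurable_fun D h -> measurable_fun D k ->
  (forall t, D t -> [/\ 0 <= f t, 0 <= g t, 0 <= h t & 0 <= k t])%R ->
  (forall t, D t -> f t + c * g t <= h t + c * k t)%R ->
  \int[mu]_(t in D) (f t)%:E + c%:E * \int[mu]_(t in D) (g t)%:E
  <= \int[mu]_(t in D) (h t)%:E + c%:E * \int[mu]_(t in D) (k t)%:E.
Proof.
move=> c_ge0 mf mg mh mk fghk_ge0 le_fghk.
rewrite -!ge0_integralDZ_EFin //; last 2 first.
- by move=> t /fghk_ge0[].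
- by move=> t /fghk_ge0[].
apply: (ge0_le_integral _ mD).
- by move=> t /fghk_ge0[f_ge0 g_ge0 _ _]; rewrite lee_fin addr_ge0 ?mulr_ge0.
- by apply/measurable_EFinP; apply: measurable_funD => //; exact: measurable_funM.
- by apply/measurable_EFinP; apply: measurable_funD => //; exact: measurable_funM.
- by move=> t Dt; rewrite lee_fin le_fghk.
Qed.

End integral_inequality.

Section tail_expectation.
Context {d} {T : measurableType d} {R : realType} (P : probability T R).
Local Open Scope ereal_scope.

Lemma ge0_expectation_tail (F : T -> R) :
  measurable_fun setT F -> (forall x, 0 <= F x)%R ->
  'E_P[F] = \int[lebesgue_measure]_(t in `[0%R, +oo[) P (F @^-1` `]t, +oo[).
Proof.
move=> mF F_ge0.
exact: (@ge0_expectation_ccdf _ _ _ P (mfun_Sub (mem_set mF)) F_ge0).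
Qed.

Lemma expectation_tail (F : T -> R) : F \in Lfun P 1 ->
  'E_P[F] = \int[lebesgue_measure]_(t in `[0%R, +oo[) P (F @^-1` `]t, +oo[)
          - \int[lebesgue_measure]_(t in `]-oo, 0%R[) P (F @^-1` `]-oo, t]).
Proof.
move=> LF; have /Lfun1_integrable/integrableP[/measurable_EFinP mF _] := LF.
exact: (@expectation_cdf_ccdf _ _ _ P (mfun_Sub (mem_set mF)) LF).
Qed.

Lemma ae_ge0_expectation_tail (F : T -> R) : F \in Lfun P 1 ->
  (forall t, (t < 0)%R -> P (F @^-1` `]t, +oo[) = 1) ->
  'E_P[F] = \int[lebesgue_measure]_(t in `[0%R, +oo[) P (F @^-1` `]t, +oo[).
Proof.
move=> LF tail1; rewrite expectation_tail // [X in _ - X]integral0_eq ?sube0 //.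
move=> t; rewrite /= in_itv /= => t_lt0.
have mF : measurable_fun setT F.
  by have /Lfun1_integrable/integrableP[/measurable_EFinP] := LF.
rewrite -setCitvr -preimage_setC probability_setC ?tail1 ?subee //.
by rewrite -[_ @^-1` _]setTI; exact: mF.
Qed.

End tail_expectation.

Section same_law.
Context {d d'} {T : measurableType d} {T' : measurableType d'} {R : realType}.
Context (P : probability T R) (P' : probability T' R) (F : T -> R) (G : T' -> R).
Hypotheses (mF : measurable_fun setT F) (mG : measurable_fun setT G).
Hypothesis FG_law : forall B, measurable B -> P' (G @^-1` B) = P (F @^-1` B).
Local Open Scope ereal_scope.

Let tail_norm_law t :
  P' ((Num.norm \o G) @^-1` `]t, +oo[) = P ((Num.norm \o F) @^-1` `]t, +oo[).
Proof.
apply: (FG_law (Num.norm @^-1` `]t, +oo[)).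
by rewrite -[_ @^-1` _]setTI; apply: normr_measurable => //; exact: measurable_itv.
Qed.

Lemma Lfun1_same_law : F \in Lfun P 1 -> G \in Lfun P' 1.
Proof.
move=> /Lfun1_integrable/integrableP[_ iF].
apply/Lfun1_integrable/integrableP; split; first exact/measurable_EFinP.
have normE d0 (T0 : measurableType d0) (Q : probability T0 R) (H : T0 -> R) :
    \int[Q]_x `|(EFin \o H) x| = 'E_Q[Num.norm \o H].
  by rewrite unlock; apply: eq_integral.
have mnormG : measurable_fun setT (Num.norm \o G).
  by apply: measurableT_comp => //; exact: normr_measurable.
have mnormF : measurable_fun setT (Num.norm \o F).
  by apply: measurableT_comp => //; exact: normr_measurable.
rewrite normE ge0_expectation_tail //; last by move=> x; exact: normr_ge0.
under eq_integral do rewrite tail_norm_law.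
by rewrite -ge0_expectation_tail -?normE // => x; exact: normr_ge0.
Qed.

Lemma expectation_same_law : F \in Lfun P 1 -> 'E_P'[G] = 'E_P[F].
Proof.
move=> LF; rewrite !expectation_tail ?Lfun1_same_law //.
by congr (_ - _); apply: eq_integral => t _; rewrite FG_law.
Qed.

End same_law.

Section survival_function.
Context {d} {T : measurableType d} {R : realType} (P : probability T R) (X : T -> R).
Hypothesis mX : measurable_fun setT X.
Local Open Scope ereal_scope.

Definition survival (t : R) : R := fine (P (X @^-1` `]t, +oo[)).

Let measurable_preimage_itv (i : interval R) : measurable (X @^-1` [set` i]).
Proof. by rewrite -[_ @^-1` _]setTI; exact: mX. Qed.

Lemma survivalE t : P (X @^-1` `]t, +oo[) = (survival t)%:E.
Proof. by rewrite fineK // fin_num_measure. Qed.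

Lemma survival_itv01 t : (0 <= survival t <= 1)%R.
Proof. by rewrite -!lee_fin -survivalE measure_ge0 probability_le1. Qed.

Lemma measurable_survival : measurable_fun setT survival.
Proof.
apply: nonincreasing_measurable => // s t st.
rewrite -lee_fin -!survivalE; apply: le_measure; rewrite ?inE //.
by move=> w /=; rewrite !in_itv /= !andbT; exact: le_lt_trans.
Qed.

Lemma survival_lt0 t : (forall x, 0 <= X x)%R -> (t < 0)%R -> survival t = 1%R.
Proof.
move=> X_ge0 t_lt0; rewrite /survival [X @^-1` _](_ : _ = setT).
  by rewrite probability_setT.
by apply/seteqP; split => // x _ /=; rewrite in_itv /= andbT (lt_le_trans t_lt0).
Qed.

Lemma probability_itvNy_survival t :
  P (X @^-1` `]-oo, t]) = (1 - survival t)%:E.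
Proof. by rewrite -setCitvr -preimage_setC probability_setC // survivalE. Qed.

End survival_function.

Section Lfun_selection.
Context {d} {T : measurableType d} {R : realType} (mu : {measure set T -> \bar R}).
Local Open Scope ereal_scope.

Lemma Lfun1_selection n (Y : 'I_n -> T -> R) (F : T -> R) :
  (forall i, Y i \in Lfun mu 1) -> measurable_fun setT F ->
  (forall w, exists i, F w = Y i w) -> F \in Lfun mu 1.
Proof.
move=> LY mF F_sel; apply/Lfun1_integrable.
have int_sum : mu.-integrable setT (fun w => \sum_(i < n) `|Y i w|%:E).
  apply: integrable_sum => // i _.
  have /Lfun1_integrable/integrable_abse := LY i.
  by apply: eq_integrable => // w _ /=; rewrite abse_EFin.
apply: (le_integrable measurableT _ _ int_sum); first exact/measurable_EFinP.
move=> w _ /=; have [i ->] := F_sel w.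
rewrite sumEFin !abse_EFin lee_fin ger0_norm ?sumr_ge0 // (bigD1 i) //= lerDl.
exact: sumr_ge0.
Qed.

End Lfun_selection.

Lemma bigmin_EFin_attained {R : realType} {n} (f : 'I_n -> R) : (0 < n)%N ->
  exists i, (\big[Order.min/+oo]_(j < n) (f j)%:E = (f i)%:E)%E.
Proof.
move=> n_gt0; have [i _ ->] := eq_bigmin (Ordinal n_gt0) predT (fun j => (f j)%:E) isT
  (fun j _ => leey _).
by exists i.
Qed.

Lemma bigmax_EFin_attained {R : realType} {n} (f : 'I_n -> R) : (0 < n)%N ->
  exists i, (\big[Order.max/-oo]_(j < n) (f j)%:E = (f i)%:E)%E.
Proof.
move=> n_gt0; have [i _ ->] := eq_bigmax (Ordinal n_gt0) predT (fun j => (f j)%:E) isT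
  (fun j _ => leNye _).
by exists i.
Qed.

Section iid_copies.
Context {d d'} {T : measurableType d} {T' : measurableType d'} {R : realType}.
Context {P : probability T R} {X : T -> R} {P' : probability T' R}.
Context {n : nat} {Y : 'I_n -> T' -> R}.
Hypotheses (mX : measurable_fun setT X) (hY : iid_copies P X P' Y).
Local Open Scope ereal_scope.

Lemma iid_copies_measurable i : measurable_fun setT (Y i).
Proof. by case: hY. Qed.

Lemma iid_copies_law i B : measurable B -> P' (Y i @^-1` B) = P (X @^-1` B).
Proof. by case: hY => _ law _; exact: law. Qed.

Lemma Lfun1_iid_copies i : X \in Lfun P 1 -> Y i \in Lfun P' 1.
Proof.
exact: Lfun1_same_law mX (iid_copies_measurable i) (iid_copies_law i).
Qed.

Lemma expectation_iid_copies i : X \in Lfun P 1 -> 'E_P'[Y i] = 'E_P[X].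
Proof.
exact: expectation_same_law mX (iid_copies_measurable i) (iid_copies_law i).
Qed.

Lemma probability_bigcap_iid_copies (B : set R) : measurable B ->
  P' (\bigcap_(i in [set: 'I_n]) (Y i @^-1` B)) = (fine (P (X @^-1` B)) ^+ n)%:E.
Proof.
move=> mB; case: hY => _ _ ->; last by [].
rewrite -[in RHS](card_ord n) -prodr_const -prodEFin; apply: eq_bigr => i _.
rewrite iid_copies_law // fineK // fin_num_measure //.
by rewrite -[_ @^-1` _]setTI; exact: mX.
Qed.

End iid_copies.

Lemma iid_copies_shift {d d'} {T : measurableType d} {T' : measurableType d'} {R : realType}
    {P : probability T R} {X : T -> R} {P' : probability T' R}
    {n} {W : 'I_n -> T' -> R} {r : R} :
  iid_copies P (fun t => X t + r) P' W -> iid_copies P X P' (fun i w => W i w - r).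
Proof.
case=> mW lawW indepW.
have mB B : measurable B -> measurable ((fun x : R => x - r) @^-1` B).
  by move=> mB; rewrite -[_ @^-1` _]setTI; exact: measurable_funB.
have preimage_shift B : (fun t => X t + r) @^-1` ((fun x => x - r) @^-1` B) = X @^-1` B.
  by apply/seteqP; split => t /=; rewrite addrK.
split.
- by move=> i; exact: measurable_funB.
- move=> i B mB0; rewrite -preimage_shift -(lawW i); last exact: mB.
  reflexivity.
- move=> B mB0; rewrite (indepW (fun i => (fun x => x - r) @^-1` B i)) => [|i].
    reflexivity.
  exact: mB.
Qed.

Section order_statistics.
Context {d d'} {T : measurableType d} {T' : measurableType d'} {R : realType}.
Context {P : probability T R} {X : T -> R} {P' : probability T' R}.
Context {n : nat} (Y : 'I_n -> T' -> R).
Hypotheses (mX : measurable_fun setT X) (hY : iid_copies P X P' Y) (n_gt0 : (0 < n)%N).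
Local Open Scope ereal_scope.

(* For [0 < n] the extended-real extrema are attained, so [fine] loses nothing. *)
Definition min_copies (w : T') : R := fine (\big[Order.min/+oo]_(i < n) (Y i w)%:E).
Definition max_copies (w : T') : R := fine (\big[Order.max/-oo]_(i < n) (Y i w)%:E).

Lemma EFin_min_copies w : (min_copies w)%:E = \big[Order.min/+oo]_(i < n) (Y i w)%:E.
Proof. by rewrite /min_copies; have [i ->] := bigmin_EFin_attained (Y^~ w) n_gt0. Qed.

Lemma EFin_max_copies w : (max_copies w)%:E = \big[Order.max/-oo]_(i < n) (Y i w)%:E.
Proof. by rewrite /max_copies; have [i ->] := bigmax_EFin_attained (Y^~ w) n_gt0. Qed.

Lemma min_copies_attained w : exists i, min_copies w = Y i w.
Proof.
by have [i e] := bigmin_EFin_attained (Y^~ w) n_gt0; exists i; rewrite /min_copies e.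
Qed.

Lemma max_copies_attained w : exists i, max_copies w = Y i w.
Proof.
by have [i e] := bigmax_EFin_attained (Y^~ w) n_gt0; exists i; rewrite /max_copies e.
Qed.

Let mEFinY i : measurable_fun setT (EFin \o Y i).
Proof. exact/measurable_EFinP/(iid_copies_measurable hY). Qed.

Lemma measurable_min_copies : measurable_fun setT min_copies.
Proof.
apply/measurable_EFinP; rewrite (_ : _ \o _ = fun w => \big[Order.min/+oo]_(i < n) (Y i w)%:E).
  elim: (index_enum _) => [|i s IHs].
    by under eq_fun do rewrite big_nil; exact: measurable_cst.
  by under eq_fun do rewrite big_cons; exact: measurable_mine (mEFinY i) IHs.
by apply/funext => w; rewrite /= EFin_min_copies.
Qed.

Lemma measurable_max_copies : measurable_fun setT max_copies.
Proof.
apply/measurable_EFinP; rewrite (_ : _ \o _ = fun w => \big[Order.max/-oo]_(i < n) (Y i w)%:E).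
  elim: (index_enum _) => [|i s IHs].
    by under eq_fun do rewrite big_nil; exact: measurable_cst.
  by under eq_fun do rewrite big_cons; exact: measurable_maxe (mEFinY i) IHs.
by apply/funext => w; rewrite /= EFin_max_copies.
Qed.

Lemma min_copies_survival t :
  P' (min_copies @^-1` `]t, +oo[) = (survival P X t ^+ n)%:E.
Proof.
have -> : min_copies @^-1` `]t, +oo[ = \bigcap_(i in [set: 'I_n]) (Y i @^-1` `]t, +oo[).
  apply/seteqP; split => w /=; rewrite in_itv /= andbT -lte_fin EFin_min_copies.
    by move=> /bigmin_gtP[_ Yt] i _; rewrite /= in_itv /= andbT -lte_fin Yt.
  move=> Yt; apply/bigmin_gtP; split=> [|i _]; first exact: ltry.
  by have := Yt i I; rewrite /= in_itv /= andbT lte_fin.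
by rewrite (probability_bigcap_iid_copies mX hY).
Qed.

Lemma max_copies_survival t :
  P' (max_copies @^-1` `]t, +oo[) = (1 - (1 - survival P X t) ^+ n)%:E.
Proof.
have max_le : max_copies @^-1` `]-oo, t] = \bigcap_(i in [set: 'I_n]) (Y i @^-1` `]-oo, t]).
  apply/seteqP; split => w /=; rewrite in_itv /= -lee_fin EFin_max_copies.
    by move=> /bigmax_leP[_ Yt] i _; rewrite /= in_itv /= -lee_fin Yt.
  move=> Yt; apply/bigmax_leP; split=> [|i _]; first exact: leNye.
  by have := Yt i I; rewrite /= in_itv /= lee_fin.
rewrite -setCitvl -preimage_setC probability_setC; last first.
  by rewrite -[_ @^-1` _]setTI; exact: measurable_max_copies.
by rewrite max_le (probability_bigcap_iid_copies mX hY) // probability_itvNy_survival.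
Qed.

Hypothesis LX : X \in Lfun P 1.

Lemma Lfun1_min_copies : min_copies \in Lfun P' 1.
Proof.
apply: Lfun1_selection measurable_min_copies min_copies_attained.
by move=> i; exact: Lfun1_iid_copies mX hY i LX.
Qed.

Lemma Lfun1_max_copies : max_copies \in Lfun P' 1.
Proof.
apply: Lfun1_selection measurable_max_copies max_copies_attained.
by move=> i; exact: Lfun1_iid_copies mX hY i LX.
Qed.

Hypothesis X_ge0 : forall x, (0 <= X x)%R.

Lemma expectation_min_copies :
  'E_P'[min_copies] = \int[lebesgue_measure]_(t in `[0%R, +oo[) (survival P X t ^+ n)%:E.
Proof.
rewrite ae_ge0_expectation_tail.
- by apply: eq_integral => t _; rewrite min_copies_survival.
- exact: Lfun1_min_copies.
- by move=> t t_lt0; rewrite min_copies_survival survival_lt0 // expr1n.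
Qed.

Lemma expectation_max_copies : 'E_P'[max_copies]
  = \int[lebesgue_measure]_(t in `[0%R, +oo[) (1 - (1 - survival P X t) ^+ n)%:E.
Proof.
rewrite ae_ge0_expectation_tail.
- by apply: eq_integral => t _; rewrite max_copies_survival.
- exact: Lfun1_max_copies.
- by move=> t t_lt0; rewrite max_copies_survival survival_lt0 // subrr expr0n gtn_eqF // subr0.
Qed.

End order_statistics.

Section survival_moments.
Context {d} {T : measurableType d} {R : realType} (P : probability T R) (X : T -> R).
Hypotheses (mX : measurable_fun setT X) (X_ge0 : forall x, 0 <= X x).
Hypothesis LX : X \in Lfun P 1.
Local Open Scope ereal_scope.

Local Notation S := (survival P X).
Local Notation "\int_0^oo f" := (\int[lebesgue_measure]_(t in `[0%R, +oo[) f t)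
  (at level 10, f at level 8).

Let S01 t : (0 <= S t <= 1)%R := survival_itv01 P X mX t.

Let mSX k : measurable_fun setT (fun t => S t ^+ k)%R.
Proof. exact: measurable_funX (measurable_survival P X mX). Qed.

Let mSC k : measurable_fun setT (fun t => 1 - (1 - S t) ^+ k)%R.
Proof.
apply/measurable_funB/measurable_funX/measurable_funB => //.
exact: measurable_survival.
Qed.

Let SX_ge0 k t : (0 <= S t ^+ k)%R.
Proof. by case/andP: (S01 t) => S0 _; exact: exprn_ge0. Qed.

Let SC_ge0 k t : (0 <= 1 - (1 - S t) ^+ k)%R.
Proof.
case/andP: (S01 t) => S0 S1.
by rewrite subr_ge0 exprn_ile1 // ?subr_ge0 // lerBlDr lerDl.
Qed.

Definition mean_min k : R := fine (\int_0^oo (fun t => (S t ^+ k)%:E)).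
Definition mean_max k : R := fine (\int_0^oo (fun t => (1 - (1 - S t) ^+ k)%:E)).

Local Notation A k := (\int_0^oo (fun t => (S t ^+ k)%:E)).
Local Notation B k := (\int_0^oo (fun t => (1 - (1 - S t) ^+ k)%:E)).

Let le_integral_survival (c : R) (f g h k : R -> R) : (0 <= c)%R ->
  measurable_fun setT f -> measurable_fun setT g ->
  measurable_fun setT h -> measurable_fun setT k ->
  (forall t, [/\ 0 <= f t, 0 <= g t, 0 <= h t & 0 <= k t])%R ->
  (forall t, f t + c * g t <= h t + c * k t)%R ->
  \int_0^oo (fun t => (f t)%:E) + c%:E * \int_0^oo (fun t => (g t)%:E)
  <= \int_0^oo (fun t => (h t)%:E) + c%:E * \int_0^oo (fun t => (k t)%:E).
Proof.
move=> c_ge0 mf mg mh mk fghk_ge0 le_fghk.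
by apply: ge0_le_integralDZ => //; apply: measurable_funTS.
Qed.

Lemma expectation_survival : 'E_P[X] = A 1.
Proof.
by rewrite ge0_expectation_tail //; apply: eq_integral => t _; rewrite survivalE ?expr1.
Qed.

Let A_le k j : (j <= k)%N -> A k <= A j.
Proof.
move=> jk; apply: ge0_le_integral => //.
- by move=> t _; rewrite lee_fin.
- by apply: measurable_funTS; apply/measurable_EFinP; exact: mSX.
- by apply: measurable_funTS; apply/measurable_EFinP; exact: mSX.
- by move=> t _; case/andP: (S01 t) => S0 S1; rewrite lee_fin ler_wiXn2l.
Qed.

Let min_gap m : (0 < m)%N -> A 1 + (m%:R - 1)%:E * A 2 <= A m + (m%:R - 1)%:E * A 1.
Proof.
move=> m_gt0; apply: le_integral_survival => //.
- by rewrite subr_ge0 ler1n.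
move=> t; have := subr_exprS_le (S t) m.-1 (S01 t).
by rewrite prednK // -subn1 natrB // expr1; lra.
Qed.

Let max_gap_ge m : (1 < m)%N -> A 1 + 1%:E * A 1 <= B m + 1%:E * A 2.
Proof.
move=> m_gt1; apply: le_integral_survival => // t.
case/andP: (S01 t) => S0 S1.
have : ((1 - S t) ^+ m <= (1 - S t) ^+ 2)%R by rewrite ler_wiXn2l // ?subr_ge0 ?lerBlDr ?lerDl.
rewrite !expr1 !mul1r sqrrB expr1n mul1r mulr2n; lra.
Qed.

Let max_gap_le m : (0 < m)%N -> B m + (m%:R - 1)%:E * A 2 <= A 1 + (m%:R - 1)%:E * A 1.
Proof.
move=> m_gt0; apply: le_integral_survival => //.
- by rewrite subr_ge0 ler1n.
move=> t; case/andP: (S01 t) => S0 S1.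
have := subr_exprS_le (1 - S t) m.-1; rewrite prednK // -subn1 natrB // ?ler1n //.
rewrite subr_ge0 S1 lerBlDr lerDl S0 => /(_ isT).
rewrite !expr1 !sqrrB expr1n mul1r mulr2n; nra.
Qed.

Let A_fin_num k : (0 < k)%N -> A k \is a fin_num.
Proof.
move=> k_gt0; rewrite ge0_fin_numE ?integral_ge0 // => [|t _]; last by rewrite lee_fin.
apply: le_lt_trans (A_le k 1 k_gt0) _.
by rewrite -expectation_survival ltey_eq expectation_fin_num.
Qed.

Lemma mean_minE k : (0 < k)%N -> A k = (mean_min k)%:E.
Proof. by move=> k_gt0; rewrite fineK ?A_fin_num. Qed.

Let B_fin_num m : (0 < m)%N -> B m \is a fin_num.
Proof.
move=> m_gt0; rewrite ge0_fin_numE ?integral_ge0 // => [|t _]; last by rewrite lee_fin.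
have c_ge0 : (0 <= m%:R - 1 :> R)%R by rewrite subr_ge0 ler1n.
have B_le : B m <= A 1 + (m%:R - 1)%:E * A 1.
  apply: le_trans _ (max_gap_le _ m_gt0); rewrite leeDl // mule_ge0 ?integral_ge0 //.
  by move=> t _; rewrite lee_fin.
apply: le_lt_trans B_le _.
by rewrite mean_minE // -EFinM -EFinD ltry.
Qed.

Lemma mean_maxE m : (0 < m)%N -> B m = (mean_max m)%:E.
Proof. by move=> m_gt0; rewrite fineK ?B_fin_num. Qed.

Lemma expectation_mean_min : 'E_P[X] = (mean_min 1)%:E.
Proof. by rewrite expectation_survival mean_minE. Qed.

Lemma mean_min_bounds m : (1 < m)%N ->
  (mean_min 1 - mean_min 2 <= mean_min 1 - mean_min m
   <= (m%:R - 1) * (mean_min 1 - mean_min 2))%R.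
Proof.
move=> m_gt1; have m_gt0 := ltnW m_gt1.
have := min_gap m m_gt0; have := A_le m 2 m_gt1.
rewrite !mean_minE // -!EFinM -!EFinD !lee_fin => le_m2 gap.
by apply/andP; split; lra.
Qed.

Lemma mean_max_bounds m : (1 < m)%N ->
  (mean_min 1 - mean_min 2 <= mean_max m - mean_min 1
   <= (m%:R - 1) * (mean_min 1 - mean_min 2))%R.
Proof.
move=> m_gt1; have m_gt0 := ltnW m_gt1.
have := max_gap_le m m_gt0; have := max_gap_ge m m_gt1.
rewrite !mean_minE // mean_maxE // -!EFinM -!EFinD !lee_fin => ge_gap le_gap.
by apply/andP; split; lra.
Qed.

End survival_moments.

Lemma min_copies2 {d} {T : measurableType d} {R : realType} (V : 'I_2 -> T -> R) w :
  min_copies V w = Num.min (V ord0 w) (V ord_max w).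
Proof.
apply: EFin_inj; rewrite EFin_min_copies //.
rewrite !big_ord_recl big_ord0 (min_l (leey _)) EFin_min.
by congr (Order.min (V _ w)%:E (V _ w)%:E); apply: val_inj.
Qed.

Lemma expectation_addr_cst {d} {T : measurableType d} {R : realType}
    (P : probability T R) (F : T -> R) (r : R) :
  F \in Lfun P 1 -> ('E_P[(fun t => F t + r)%R] = 'E_P[F] + r%:E)%E.
Proof. by move=> LF; rewrite -(expectation_cst P) -expectationD ?Lfun_cst. Qed.

Section gini_indices.
Context {d} {T : measurableType d} {R : realType} (P : probability T R) (X : T -> R).
Hypotheses (mX : measurable_fun setT X) (X_ge0 : forall x, 0 <= X x).
Hypothesis LX : X \in Lfun P 1.
Local Open Scope ereal_scope.

Lemma IG_minE {d1} {T1 : measurableType d1} (P1 : probability T1 R) m (m_gt0 : (0 < m)%N)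
    (Y : 'I_m -> T1 -> R) : iid_copies P X P1 Y ->
  IG_min P X P1 m_gt0 Y = ((mean_min P X 1 - mean_min P X m) / (m%:R * mean_min P X 1))%R.
Proof.
move=> hY; rewrite /IG_min expectation_mean_min //.
have -> : \int[P1]_w ((Y (Ordinal m_gt0) w)%:E - \big[Order.min/+oo]_(i < m) (Y i w)%:E)
    = 'E_P1[Y (Ordinal m_gt0) \- min_copies Y].
  by rewrite expectation.unlock; apply: eq_integral => w _; rewrite /= EFinB EFin_min_copies.
rewrite expectationB; last 2 first.
- exact: Lfun1_iid_copies mX hY _ LX.
- exact: Lfun1_min_copies Y mX hY m_gt0 LX.
rewrite (expectation_iid_copies mX hY) // (expectation_min_copies Y mX hY) //.
by rewrite expectation_mean_min // mean_minE // -EFinB.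
Qed.

Lemma IG_maxE {d1} {T1 : measurableType d1} (P1 : probability T1 R) m (m_gt0 : (0 < m)%N)
    (Y : 'I_m -> T1 -> R) : iid_copies P X P1 Y ->
  IG_max P X P1 m_gt0 Y = ((mean_max P X m - mean_min P X 1) / (m%:R * mean_min P X 1))%R.
Proof.
move=> hY; rewrite /IG_max expectation_mean_min //.
have -> : \int[P1]_w (\big[Order.max/-oo]_(i < m) (Y i w)%:E - (Y (Ordinal m_gt0) w)%:E)
    = 'E_P1[max_copies Y \- Y (Ordinal m_gt0)].
  by rewrite expectation.unlock; apply: eq_integral => w _; rewrite /= EFinB EFin_max_copies.
rewrite expectationB; last 2 first.
- exact: Lfun1_max_copies Y mX hY m_gt0 LX.
- exact: Lfun1_iid_copies mX hY _ LX.
rewrite (expectation_iid_copies mX hY) // (expectation_max_copies Y mX hY) //.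
by rewrite expectation_mean_min // mean_maxE // -EFinB.
Qed.

Lemma GiniE {d2} {T2 : measurableType d2} (P2 : probability T2 R) (W : 'I_2 -> T2 -> R) r :
  iid_copies P (fun t => X t + r)%R P2 W ->
  Gini P (fun t => X t + r)%R P2 W
  = ((mean_min P X 1 - mean_min P X 2) / (mean_min P X 1 + r))%R.
Proof.
move=> hW; rewrite /Gini; have hV := iid_copies_shift hW; set V := fun i w => _ in hV.
have LV i : V i \in Lfun P2 1 := Lfun1_iid_copies mX hV i LX.
have LminV : min_copies V \in Lfun P2 1 := Lfun1_min_copies V mX hV isT LX.
have -> : \int[P2]_w (`|W ord0 w - W ord_max w|)%:E
    = 'E_P2[((V ord0 \+ V ord_max) \- (2 \o* min_copies V))%R].
  rewrite expectation.unlock; apply: eq_integral => w _ /=.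
  rewrite min_copies2 minr_absE /V; congr EFin.
  have -> : (W ord0 w - r - (W ord_max w - r) = W ord0 w - W ord_max w)%R by ring.
  by field.
rewrite expectation_addr_cst //.
rewrite expectationB; last 2 first.
- exact: rpredD (LV ord0) (LV ord_max).
- exact: Lfun_scale.
rewrite (expectationD (LV ord0) (LV ord_max)) (expectationZl _ LminV).
rewrite !(expectation_iid_copies mX hV) // (expectation_min_copies V mX hV) //.
rewrite expectation_mean_min // mean_minE // -!EFinD /=.
set mu := mean_min P X 1; set a2 := mean_min P X 2.
have -> : (mu + mu - 2 * a2 = 2 * (mu - a2))%R by ring.
by rewrite invfM mulrACA divff ?mul1r // pnatr_eq0.
Qed.

End gini_indices.

Theorem proposition2p8 (R : realType) (d : measure_display) (T : measurableType d)
  (P : probability T R) (X : T -> R) :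
  measurable_fun setT X ->
  (forall t, 0 <= X t) ->
  P.-integrable setT (EFin \o X) ->
  (0 < 'E_P[X])%E ->
  forall (m : nat) (Hm : (1 < m)%N),
  exists r s : R, 0 < r /\ 0 < s /\
    (forall (d1 : measure_display) (T1 : measurableType d1) (P1 : probability T1 R)
            (Y : 'I_m -> T1 -> R),
       iid_copies P X P1 Y ->
       forall (d2 : measure_display) (T2 : measurableType d2) (P2 : probability T2 R)
              (W : 'I_2 -> T2 -> R),
       iid_copies P (fun t => X t + r) P2 W ->
       IG_min P X P1 (ltnW Hm) Y = Gini P (fun t => X t + r) P2 W) /\
    (forall (d1 : measure_display) (T1 : measurableType d1) (P1 : probability T1 R)
            (Y : 'I_m -> T1 -> R),
       iid_copies P X P1 Y ->
       forall (d2 : measure_display) (T2 : measurableType d2) (P2 : probability T2 R)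
              (W : 'I_2 -> T2 -> R),
       iid_copies P (fun t => X t + s) P2 W ->
       IG_max P X P1 (ltnW Hm) Y = Gini P (fun t => X t + s) P2 W).
Proof.
move=> mX X_ge0 iX EX_gt0 m m_gt1.
have LX : X \in Lfun P 1 by exact/Lfun1_integrable.
have mu_gt0 : 0 < mean_min P X 1 by rewrite -lte_fin -expectation_mean_min.
have min_bounds := mean_min_bounds P X mX X_ge0 LX m m_gt1.
have max_bounds := mean_max_bounds P X mX X_ge0 LX m m_gt1.
have [r r_gt0 r_eq] := shifted_ratio mu_gt0 m_gt1 min_bounds.
have [s s_gt0 s_eq] := shifted_ratio mu_gt0 m_gt1 max_bounds.
exists r, s; split=> //; split=> //; split=> d1 T1 P1 Y hY d2 T2 P2 W hW.
- by rewrite IG_minE // GiniE.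
- by rewrite IG_maxE // GiniE.
Qed.
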